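(* Let $k$ be a field, $r\ge2$, and let $B$ be an $F_r$-Lie algebra satisfying $\Phi1$: $\forall x_1,\dots,x_4\ (x_1x_2)(x_3x_4)=0$, $\Phi2$: $\forall x,y\ (xyx=0\wedge xyy=0\to xy=0)$ and $\Phi3$: $\forall x,y,z\ (x\ne0\wedge xy=0\wedge xz=0\to yz=0)$. Let $c_1,\dots,c_n$, $n\le r$, be elements of the designated copy of $F_r$ which are linearly independent modulo $\mathrm{Fit}(F_r)$. Then $c_1,\dots,c_n$ are linearly independent modulo $\mathrm{Fit}(B)$.
   Context: $F_r$ is the free metabelian Lie algebra over $k$ of rank $r$ with free base $a_1,\dots,a_r$; an $F_r$-Lie algebra is a Lie algebra containing a designated copy of $F_r$. Products are left-normed. $\mathrm{Fit}(\cdot)$ denotes the Fitting radical (sum of all nilpotent ideals). *)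

From HB Require Import structures.
From mathcomp Require Import all_boot all_order all_algebra.
Set Implicit Arguments. Unset Strict Implicit. Unset Printing Implicit Defensive.
Import GRing.Theory.
Local Open Scope ring_scope.

Section LieDefs.
Variable k : fieldType.

Definition is_lie (L : lmodType k) (br : L -> L -> L) : Prop :=
  [/\ (forall (a : k) (x y z : L), br (a *: x + y) z = a *: br x z + br y z),
      (forall (a : k) (x y z : L), br z (a *: x + y) = a *: br z x + br z y),
      (forall x : L, br x x = 0) &
      (forall x y z : L, br (br x y) z + br (br y z) x + br (br z x) y = 0)].

Variable L : lmodType k.
Variable br : L -> L -> L.

(* left-normed product x1 x2 ... xm = (...(x1 x2) ...) xm ; empty product 0 *)
Definition lnprod (s : seq L) : L :=
  if s is x :: s' then foldl br x s' else 0.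

Definition subspace (P : L -> Prop) : Prop :=
  P 0 /\ forall (a : k) (x y : L), P x -> P y -> P (a *: x + y).

Definition gen_subalg (r : nat) (a : 'I_r -> L) (x : L) : Prop :=
  forall P : L -> Prop, subspace P ->
    (forall y z, P y -> P z -> P (br y z)) -> (forall i, P (a i)) -> P x.

Definition ideal_in (S I : L -> Prop) : Prop :=
  subspace I /\ (forall x, I x -> S x) /\
  (forall s x, S s -> I x -> I (br s x)).

Definition nilpotent_pred (I : L -> Prop) : Prop :=
  exists m : nat, (0 < m)%N /\
    forall s : seq L, size s = m -> (forall y, y \in s -> I y) -> lnprod s = 0.

Definition Fit_in (S : L -> Prop) (x : L) : Prop :=
  exists s : seq L, x = \sum_(y <- s) y /\
    forall y, y \in s -> exists I : L -> Prop,
      [/\ ideal_in S I, nilpotent_pred I & I y].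

Definition free_metabelian_on (r : nat) (a : 'I_r -> L) : Prop :=
  (forall x1 x2 x3 x4, gen_subalg a x1 -> gen_subalg a x2 ->
       gen_subalg a x3 -> gen_subalg a x4 ->
       br (br x1 x2) (br x3 x4) = 0) /\
  forall (M : lmodType k) (brM : M -> M -> M), is_lie brM ->
    (forall y1 y2 y3 y4 : M, brM (brM y1 y2) (brM y3 y4) = 0) ->
    forall m : 'I_r -> M, exists f : L -> M,
      [/\ (forall (c : k) x y, gen_subalg a x -> gen_subalg a y ->
             f (c *: x + y) = c *: f x + f y),
          (forall x y, gen_subalg a x -> gen_subalg a y ->
             f (br x y) = brM (f x) (f y)) &
          (forall i, f (a i) = m i)].

End LieDefs.

(* Under Phi2 every nilpotent ideal of a Lie algebra is abelian: if I^m = 0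
   and u, q lie in I with (u q) u = (u q) q = 0 (products one step longer, hence
   zero by downward induction on the length), then u q = 0.  Applying Phi2 once
   more to y, z taken from two nilpotent ideals shows that Fit(B) itself is
   abelian.  Hence Fit(B) ∩ F_r is an abelian ideal of F_r and so lies in
   Fit(F_r); a combination of the c_i in Fit(B) is therefore in Fit(F_r), where
   its coefficients vanish by hypothesis. *)
From HB Require Import structures.
From mathcomp Require Import all_boot all_order all_algebra.
Import GRing.Theory.
Local Open Scope ring_scope.

Section LieAlgebra.
Set Implicit Arguments. Unset Strict Implicit.
Variables (k : fieldType) (B : lmodType k) (br : B -> B -> B).
Hypothesis hLie : is_lie br.

Lemma brDl x y z : br (x + y) z = br x z + br y z.
Proof. by case: hLie => h _ _ _; rewrite -[x]scale1r h !scale1r. Qed.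

Lemma brDr x y z : br z (x + y) = br z x + br z y.
Proof. by case: hLie => _ h _ _; rewrite -[x]scale1r h !scale1r. Qed.

Lemma br0l z : br 0 z = 0.
Proof. by apply: (addrI (br 0 z)); rewrite -brDl !addr0. Qed.

Lemma br0r z : br z 0 = 0.
Proof. by apply: (addrI (br z 0)); rewrite -brDr !addr0. Qed.

Lemma br_antisym x y : br y x = - br x y.
Proof.
case: hLie => _ _ brxx _; apply/eqP; rewrite -addr_eq0 addrC.
by have := brxx (x + y); rewrite brDl !brDr !brxx add0r addr0 => ->.
Qed.

Lemma br_suml (s : seq B) w : br (\sum_(y <- s) y) w = \sum_(y <- s) br y w.
Proof.
by elim: s => [|y s IH]; rewrite ?big_nil ?br0l // !big_cons brDl IH.
Qed.

Lemma br_sumr (s : seq B) w : br w (\sum_(y <- s) y) = \sum_(y <- s) br w y.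
Proof.
by elim: s => [|y s IH]; rewrite ?big_nil ?br0r // !big_cons brDr IH.
Qed.

Lemma lnprod_rcons x s q :
  lnprod br (rcons (x :: s) q) = br (lnprod br (x :: s)) q.
Proof. by rewrite /= foldl_rcons. Qed.

Lemma subspaceZ (P : B -> Prop) c x : subspace P -> P x -> P (c *: x).
Proof. by case=> P0 PD Px; rewrite -[_ *: x]addr0; apply: PD. Qed.

Lemma subspaceN (P : B -> Prop) x : subspace P -> P x -> P (- x).
Proof. by move=> hP Px; rewrite -scaleN1r; apply: subspaceZ. Qed.

Lemma subspace_sum (P : B -> Prop) n (lam : 'I_n -> k) (c : 'I_n -> B) :
  subspace P -> (forall i, P (c i)) -> P (\sum_(i < n) lam i *: c i).
Proof.
move=> hP Pc; have [P0 PD] := hP.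
apply: (big_ind P) => // [u v Pu Pv | i _]; first by rewrite -[u]scale1r; apply: PD.
exact: subspaceZ.
Qed.

Definition subalgebra (S : B -> Prop) : Prop :=
  subspace S /\ forall y z, S y -> S z -> S (br y z).

Lemma gen_subalg_subalgebra r (a : 'I_r -> B) : subalgebra (gen_subalg br a).
Proof.
split; first split.
- by move=> P [].
- move=> c x y gx gy P hP Pbr Pa; case: (hP) => _ PD.
  exact: PD (gx P hP Pbr Pa) (gy P hP Pbr Pa).
- move=> y z gy gz P hP Pbr Pa.
  exact: Pbr (gy P hP Pbr Pa) (gz P hP Pbr Pa).
Qed.

Lemma Fit_in0 S : Fit_in br S 0.
Proof. by exists [::]; rewrite big_nil. Qed.

Lemma Fit_inD S x y : Fit_in br S x -> Fit_in br S y -> Fit_in br S (x + y).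
Proof.
move=> [s [-> Hs]] [t [-> Ht]]; exists (s ++ t); rewrite big_cat; split=> //.
by move=> z; rewrite mem_cat => /orP[]; [apply: Hs | apply: Ht].
Qed.

Lemma Fit_inZ S c x : Fit_in br S x -> Fit_in br S (c *: x).
Proof.
move=> [s [-> Hs]]; exists (map ( *:%R c) s); rewrite big_map scaler_sumr.
split=> // _ /mapP [y ys ->]; have [I [hI nI Iy]] := Hs y ys.
by exists I; split=> //; apply: subspaceZ => //; case: hI.
Qed.

Lemma Fit_in_br S w x : S w -> Fit_in br S x -> Fit_in br S (br w x).
Proof.
move=> Sw [s [-> Hs]]; exists (map (br w) s); rewrite big_map br_sumr.
split=> // _ /mapP [y ys ->]; have [I [hI nI Iy]] := Hs y ys.
by exists I; split=> //; case: hI => _ [_ Ibr]; apply: Ibr.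
Qed.

Lemma ideal_Fit_cap S :
  subalgebra S -> ideal_in br S (fun z => S z /\ Fit_in br (fun _ => True) z).
Proof.
move=> [[S0 SD] Sbr]; split; last split.
- split; first by split; [|apply: Fit_in0].
  move=> c x y [Sx Fx] [Sy Fy].
  by split; [apply: SD | apply: Fit_inD; first apply: Fit_inZ].
- by move=> x [].
- by move=> s x Ss [Sx Fx]; split; [apply: Sbr | apply: Fit_in_br].
Qed.

Lemma abelian_ideal_sub_Fit S I :
  ideal_in br S I -> (forall u v, I u -> I v -> br u v = 0) ->
  forall x, I x -> Fit_in br S x.
Proof.
move=> hI Iab x Ix; exists [:: x]; rewrite big_seq1; split=> // _ /[!inE] /eqP->.
exists I; split=> //; exists 2%N; split=> // -[|y [|z []]] //= _ Hs.
by apply: Iab; apply: Hs; rewrite !inE eqxx ?orbT.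
Qed.

Section Phi2.
Hypothesis Phi2 : forall x y : B,
  br (br x y) x = 0 -> br (br x y) y = 0 -> br x y = 0.

Section NilpotentIdeal.
Variables (S I : B -> Prop) (m : nat).
Hypothesis hI : ideal_in br S I.
Hypothesis hm : forall s : seq B, size s = m ->
  (forall y, y \in s -> I y) -> lnprod br s = 0.

Lemma lnprod_ideal x s :
  I x -> (forall y, y \in s -> I y) -> I (lnprod br (x :: s)).
Proof.
case: hI => _ [IS Ibr]; elim: s x => [|y s IH] x Ix Hs //=.
apply: IH => [|z zs]; last by apply: Hs; rewrite inE zs orbT.
by apply: Ibr; [apply: IS | apply: Hs; rewrite inE eqxx].
Qed.

Lemma lnprod_nilpotent_ideal_eq0 d x s q :
  (size s + 2 + d = m)%N -> I x -> (forall y, y \in s -> I y) -> I q ->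
  lnprod br (rcons (x :: s) q) = 0.
Proof.
elim: d s q => [|d IH] s q hsize Ix Is Iq.
  apply: hm; first by rewrite size_rcons -hsize addn0 addn2.
  by move=> y; rewrite mem_rcons !inE => /orP[/eqP->|/orP[/eqP->|/Is]].
have Isq y : y \in rcons s q -> I y by rewrite mem_rcons inE => /orP[/eqP->|/Is].
have hsize' : (size (rcons s q) + 2 + d = m)%N.
  by rewrite size_rcons -hsize [RHS]addnS !addSn.
rewrite lnprod_rcons; apply: Phi2; rewrite -lnprod_rcons rcons_cons -lnprod_rcons.
- by apply: IH => //; apply: lnprod_ideal.
- exact: IH.
Qed.
End NilpotentIdeal.

Lemma nilpotent_ideal_abelian S I u v :
  ideal_in br S I -> nilpotent_pred br I -> I u -> I v -> br u v = 0.
Proof.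
move=> hI [m [m_gt0 hm]] Iu Iv; case: m m_gt0 hm => [//|[|m]] _ hm.
  have /= -> : lnprod br [:: u] = 0 by apply: hm => // y /[!inE] /eqP->.
  exact: br0l.
have := @lnprod_nilpotent_ideal_eq0 S I m.+2 hI hm m u [::] v.
by apply => //; rewrite add0n add2n.
Qed.

Lemma Fit_abelian u v :
  Fit_in br (fun _ => True) u -> Fit_in br (fun _ => True) v -> br u v = 0.
Proof.
move=> [s [-> Hs]] [t [-> Ht]].
rewrite br_suml big1_seq // => y /andP[_ ys].
rewrite br_sumr big1_seq // => z /andP[_ zt].
have [I [hI nI Iy]] := Hs y ys; have [J [hJ nJ Jz]] := Ht z zt.
have Iyz : I (br y z).
  case: (hI) => I_sub [_ Ibr].
  by rewrite br_antisym; apply: subspaceN => //; apply: Ibr.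
have Jyz : J (br y z) by case: hJ => _ [_ Jbr]; apply: Jbr.
by apply: Phi2;
  [apply: (nilpotent_ideal_abelian hI) | apply: (nilpotent_ideal_abelian hJ)].
Qed.

Lemma Fit_cap_sub_Fit S x :
  subalgebra S -> S x -> Fit_in br (fun _ => True) x -> Fit_in br S x.
Proof.
move=> hS Sx Fx; apply: (abelian_ideal_sub_Fit (ideal_Fit_cap hS)) => //.
by move=> u v [_ Fu] [_ Fv]; apply: Fit_abelian.
Qed.
End Phi2.
End LieAlgebra.

Theorem lemma3p5 (k : fieldType) (r : nat) (B : lmodType k)
    (br : B -> B -> B) (a : 'I_r -> B)
    (hr : (2 <= r)%N)
    (hLie : is_lie br)
    (hFr : free_metabelian_on br a)
    (Phi1 : forall x1 x2 x3 x4 : B, br (br x1 x2) (br x3 x4) = 0)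
    (Phi2 : forall x y : B,
        br (br x y) x = 0 -> br (br x y) y = 0 -> br x y = 0)
    (Phi3 : forall x y z : B,
        x <> 0 -> br x y = 0 -> br x z = 0 -> br y z = 0)
    (n : nat) (hn : (n <= r)%N) (c : 'I_n -> B)
    (hcF : forall i, gen_subalg br a (c i))
    (hind : forall lam : 'I_n -> k,
        Fit_in br (gen_subalg br a) (\sum_(i < n) lam i *: c i) ->
        forall i, lam i = 0) :
  forall lam : 'I_n -> k,
    Fit_in br (fun _ => True) (\sum_(i < n) lam i *: c i) ->
    forall i, lam i = 0.
Proof.
move=> lam hF; apply: hind.
have hS : subalgebra br (gen_subalg br a) := gen_subalg_subalgebra br a.
apply: (Fit_cap_sub_Fit hLie Phi2 hS _ hF).
exact: subspace_sum hS.1 hcF.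
Qed.
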